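(* Let $\{x,y\}$ be a Cartesian coordinate system in the Euclidean plane $\mathbb{E}^2$ and let $z := \frac{1}{2}(x - i y)$. Let $\xi$ be a non-trivial global conformal Killing vector field (GCKV) of $\mathbb{E}^2$, and let $\mu_0,\mu_1,\mu_2 \in \mathbb{C}$ be the complex constants such that \[ \xi = \left(\mu_0 + \mu_1 z + \tfrac{1}{2}\mu_2 z^2\right)\partial_z + \left(\overline{\mu_0} + \overline{\mu_1}\,\overline{z} + \tfrac{1}{2}\overline{\mu_2}\,\overline{z}^2\right)\partial_{\overline{z}}. \] For $\mathbb{A} = \begin{pmatrix} \alpha & \beta \\ \gamma & \delta \end{pmatrix} \in SL(2,\mathbb{C})$ (i.e. $\alpha\delta - \beta\gamma = 1$), let $\chi^{\mathbb{A}}$ be the Möbius transformation $z \mapsto \frac{\alpha z + \beta}{\gamma z + \delta}$ of the Riemann sphere $\mathbb{C}\cup\{\infty\}$. Then the push-forward $\chi^{\mathbb{A}}_{\star}(\xi)$ is written in canonical form with respect to $\{x,y\}$, i.e. takes the form $(\mu_0' + z^2)\partial_z + (\overline{\mu_0'} + \overline{z}^2)\partial_{\overline{z}}$ for some $\mu_0' \in \mathbb{C}$, if and only if \[ \mathbb{A} = \begin{pmatrix} \frac{1}{2}(\delta\mu_2 - \gamma\mu_1) & \frac{1}{2}\delta\mu_1 - \gamma\mu_0 \\ \gamma & \delta \end{pmatrix}, \qquad \frac{1}{2}\delta^2\mu_2 - \gamma\delta\mu_1 + \gamma^2\mu_0 = 1. \] Moreover, for any such $\mathbb{A}$, \[ \chi^{\mathbb{A}}_{\star}(\xi)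 = \left(\tfrac{1}{4}\left(\sigma_{\{\mu\}} - i\tau_{\{\mu\}}\right) + z^2\right)\partial_z + \left(\tfrac{1}{4}\left(\sigma_{\{\mu\}} + i\tau_{\{\mu\}}\right) + \overline{z}^2\right)\partial_{\overline{z}}, \] where the real numbers $\sigma_{\{\mu\}}, \tau_{\{\mu\}}$ are defined by $\sigma_{\{\mu\}} - i\tau_{\{\mu\}} := 2\mu_0\mu_2 - \mu_1^2$.
   Context: A conformal Killing vector of $\mathbb{E}^2$ is called global (GCKV) if it extends smoothly to the one-point compactification (Riemann sphere) $\mathbb{S}^2$; in the complex coordinate $z = \frac{1}{2}(x-iy)$ these are exactly the vector fields of the form $(\mu_0 + \mu_1 z + \frac{1}{2}\mu_2 z^2)\partial_z + \text{c.c.}$ with $\mu_0,\mu_1,\mu_2\in\mathbb{C}$. Such a field is called canonical with respect to $\{x,y\}$ when $\mu_1 = 0$ and $\mu_2 = 2$. Under a Möbius transformation $\chi^{\mathbb{A}}$, $\mathbb{A} = \begin{pmatrix}\alpha&\beta\\\gamma&\delta\end{pmatrix}$, $\alpha\delta-\beta\gamma=1$, the parameters of $\chi^{\mathbb{A}}_{\star}(\xi)$ are $\mu_0' = \alpha^2\mu_0 - \alpha\beta\mu_1 + \frac{1}{2}\beta^2\mu_2$, $\mu_1' = -2\alpha\gamma\mu_0 + (\alpha\delta+\beta\gamma)\mu_1 - \beta\delta\mu_2$, $\mu_2' = 2\gamma^2\mu_0 - 2\gamma\delta\mu_1 + \delta^2\mu_2$, and the quantity $2\mu_0\mu_2 -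 \mu_1^2$ is invariant under this transformation. *)

(* Complex numbers: an arbitrary numClosedFieldType C
   (e.g. algC, or R[i] for a real closed R); conjugation is x^*, 'i is i. *)
From HB Require Import structures.
From mathcomp Require Import all_boot all_order all_algebra.
Set Implicit Arguments. Unset Strict Implicit. Unset Printing Implicit Defensive.
Import Order.TTheory GRing.Theory Num.Theory.
Local Open Scope ring_scope.

Section GCKV.
Variable C : numClosedFieldType.

(* A GCKV xi = F(z) d_z + G(z) d_zbar on E^2 = C (coordinate z = (x - i y)/2)
   is encoded by its two component functions. *)
Definition gckv_z (mu0 mu1 mu2 : C) (z : C) : C :=
  mu0 + mu1 * z + 2^-1 * mu2 * z ^+ 2.
Definition gckv_zb (mu0 mu1 mu2 : C) (z : C) : C :=
  mu0^* + mu1^* * z^* + 2^-1 * mu2^* * (z^*) ^+ 2.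

Definition mobius (a b c d z : C) : C := (a * z + b) / (c * z + d).
Definition mobius_deriv (a b c d z : C) : C := (a * d - b * c) / (c * z + d) ^+ 2.

Definition is_pushforward (a b c d : C) (F G f g : C -> C) : Prop :=
  forall z : C, c * z + d != 0 ->
    F (mobius a b c d z) = mobius_deriv a b c d z * f z /\
    G (mobius a b c d z) = (mobius_deriv a b c d z)^* * g z.

End GCKV.

From HB Require Import structures.
From mathcomp Require Import all_boot all_order all_algebra.
From mathcomp Require Import ring.
Set Implicit Arguments. Unset Strict Implicit. Unset Printing Implicit Defensive.
Import Order.TTheory GRing.Theory Num.Theory.
Local Open Scope ring_scope.

(* By the transformation law, [chi^A] pushes the GCKV with
   parameters (mu0, mu1, mu2) forward to the GCKV with parameters [push_mu*],
   and this is the only possible push-forward because a quadratic is determined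
   by its values off one point.  Hence [chi^A_*(xi)] is canonical iff
   [push_mu1 = 0] and [push_mu2 = 2].  Now [push_mu2 = 2 K] with
   K = delta^2 mu2 / 2 - gamma delta mu1 + gamma^2 mu0, and [push_mu1 = 0]
   together with [alpha delta - beta gamma = 1] is a linear system in
   (alpha, beta) of determinant [2 K], so Cramer's rule gives alpha and beta.
   Finally 2 mu0 mu2 - mu1^2 is invariant, and its value at (push_mu0, 0, 2)
   is 4 push_mu0. *)

Lemma quadratic_coefs_eq0 (F : fieldType) (A0 A1 A2 x y z : F) :
  x != y -> x != z -> y != z ->
  A0 + A1 * x + A2 * x ^+ 2 = 0 -> A0 + A1 * y + A2 * y ^+ 2 = 0 ->
  A0 + A1 * z + A2 * z ^+ 2 = 0 ->
  [/\ A0 = 0, A1 = 0 & A2 = 0].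
Proof.
move=> nxy nxz nyz qx qy qz.
have slope_eq0 (u v : F) : u != v -> A0 + A1 * u + A2 * u ^+ 2 = 0 ->
    A0 + A1 * v + A2 * v ^+ 2 = 0 -> A1 + A2 * (u + v) = 0.
  move=> nuv qu qv.
  have : (u - v) * (A1 + A2 * (u + v)) = 0.
    by rewrite -[RHS](subrr 0) -{1}qu -qv; ring.
  by move/eqP; rewrite mulf_eq0 subr_eq0 (negbTE nuv) => /eqP.
have sxy := slope_eq0 _ _ nxy qx qy; have sxz := slope_eq0 _ _ nxz qx qz.
have A2_0 : A2 = 0.
  have : A2 * (y - z) = 0 by rewrite -[RHS](subrr 0) -{1}sxy -sxz; ring.
  by move/eqP; rewrite mulf_eq0 subr_eq0 (negbTE nyz) orbF => /eqP.
have A1_0 : A1 = 0 by rewrite -sxy A2_0; ring.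
by split=> //; rewrite -qx A1_0 A2_0; ring.
Qed.

Lemma denom_neq0_off_pole (F : fieldType) (a b c d : F) : a * d - b * c = 1 ->
  exists p, forall z, z != p -> c * z + d != 0.
Proof.
move=> det1; have [c0|cn0] := eqVneq c 0.
  exists 0 => z _; rewrite c0 mul0r add0r; apply/eqP => d0.
  by move: det1; rewrite c0 d0 !mulr0 subr0 => /eqP; rewrite eq_sym oner_eq0.
exists (- d / c) => z; apply: contra_neq => zero_denom.
have -> : z = (c * z + d - d) / c by field.
by rewrite zero_denom sub0r.
Qed.

Section GCKVPushforward.
Variable C : numClosedFieldType.

Definition push_mu0 (a b c d mu0 mu1 mu2 : C) : C :=
  a ^+ 2 * mu0 - a * b * mu1 + 2^-1 * b ^+ 2 * mu2.
Definition push_mu1 (a b c d mu0 mu1 mu2 : C) : C :=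
  - 2 * a * c * mu0 + (a * d + b * c) * mu1 - b * d * mu2.
Definition push_mu2 (a b c d mu0 mu1 mu2 : C) : C :=
  2 * c ^+ 2 * mu0 - 2 * c * d * mu1 + d ^+ 2 * mu2.

Definition gckv_invariant (mu0 mu1 mu2 : C) : C := 2 * mu0 * mu2 - mu1 ^+ 2.

Lemma gckv_invariant_push (a b c d mu0 mu1 mu2 : C) : a * d - b * c = 1 ->
  gckv_invariant (push_mu0 a b c d mu0 mu1 mu2) (push_mu1 a b c d mu0 mu1 mu2)
    (push_mu2 a b c d mu0 mu1 mu2) = gckv_invariant mu0 mu1 mu2.
Proof.
move=> det1; rewrite -[RHS]mul1r -(expr1n _ 2) -det1.
rewrite /gckv_invariant /push_mu0 /push_mu1 /push_mu2; by field.
Qed.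

Lemma gckv_z_push (a b c d mu0 mu1 mu2 z : C) : a * d - b * c = 1 -> c * z + d != 0 ->
  gckv_z (push_mu0 a b c d mu0 mu1 mu2) (push_mu1 a b c d mu0 mu1 mu2)
    (push_mu2 a b c d mu0 mu1 mu2) (mobius a b c d z)
  = mobius_deriv a b c d z * gckv_z mu0 mu1 mu2 z.
Proof.
move=> det1 nz; rewrite -[RHS]mul1r -det1.
by rewrite /gckv_z /mobius /mobius_deriv /push_mu0 /push_mu1 /push_mu2; field.
Qed.

Lemma mobius_adjK (a b c d w : C) : a * d - b * c = 1 -> - c * w + a != 0 ->
  c * mobius d (- b) (- c) a w + d != 0 /\
  mobius a b c d (mobius d (- b) (- c) a w) = w.
Proof.
move=> det1 nw.
have denomE : c * mobius d (- b) (- c) a w + d = (- c * w + a)^-1.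
  by rewrite /mobius -[RHS]mul1r -det1; field.
split; first by rewrite denomE invr_eq0.
rewrite [mobius a b c d _]/mobius denomE -[RHS]mul1r -det1 /mobius.
by field.
Qed.

Lemma gckv_z_eq0_off (p mu0 mu1 mu2 : C) :
  (forall w, w != p -> gckv_z mu0 mu1 mu2 w = 0) ->
  [/\ mu0 = 0, mu1 = 0 & mu2 = 0].
Proof.
move=> vanish.
have shift_neq (k l : nat) : k != l -> p + k%:R != p + l%:R.
  by rewrite (inj_eq (addrI p)) eqr_nat.
have off_p (k : nat) : p + k.+1%:R != p.
  by have := shift_neq k.+1 0 isT; rewrite addr0.
have [-> -> half_mu2_0] := quadratic_coefs_eq0 (shift_neq 1 2 isT) (shift_neq 1 3 isT)
  (shift_neq 2 3 isT) (vanish _ (off_p 0)) (vanish _ (off_p 1)) (vanish _ (off_p 2)).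
by move: half_mu2_0 => /eqP; rewrite mulf_eq0 invr_eq0 pnatr_eq0 /= => /eqP.
Qed.

Lemma gckv_z_eq_off (p nu0 nu1 nu2 mu0 mu1 mu2 : C) :
  (forall w, w != p -> gckv_z nu0 nu1 nu2 w = gckv_z mu0 mu1 mu2 w) ->
  [/\ nu0 = mu0, nu1 = mu1 & nu2 = mu2].
Proof.
move=> agree.
have [/subr0_eq -> /subr0_eq -> /subr0_eq ->] //:
  [/\ nu0 - mu0 = 0, nu1 - mu1 = 0 & nu2 - mu2 = 0].
apply: (@gckv_z_eq0_off p) => w /agree agree_w.
by rewrite -[RHS](subrr (gckv_z mu0 mu1 mu2 w)) -{1}agree_w /gckv_z; ring.
Qed.

Lemma gckv_z_pushforwardP (a b c d nu0 nu1 nu2 mu0 mu1 mu2 : C) :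
  a * d - b * c = 1 ->
  (forall z, c * z + d != 0 ->
     gckv_z nu0 nu1 nu2 (mobius a b c d z)
     = mobius_deriv a b c d z * gckv_z mu0 mu1 mu2 z) <->
  [/\ push_mu0 a b c d mu0 mu1 mu2 = nu0, push_mu1 a b c d mu0 mu1 mu2 = nu1
    & push_mu2 a b c d mu0 mu1 mu2 = nu2].
Proof.
move=> det1; split=> [pushed | [<- <- <-] z nz]; last exact: gckv_z_push.
(* Every [w] but one is [chi^A] of a finite point, namely of its image under
   the adjugate Moebius map. *)
have adj_det1 : d * a - (- b) * (- c) = 1 by rewrite -det1; ring.
have [p denom_neq0] := denom_neq0_off_pole adj_det1.
apply: (@gckv_z_eq_off p) => w /denom_neq0 nw.
have [nz <-] := mobius_adjK det1 nw.
by rewrite pushed // gckv_z_push.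
Qed.

Lemma gckv_zbE (mu0 mu1 mu2 w : C) : gckv_zb mu0 mu1 mu2 w = (gckv_z mu0 mu1 mu2 w)^*.
Proof. by rewrite /gckv_zb /gckv_z !(rmorphD, rmorphM, rmorphXn, fmorphV) /= rmorph1. Qed.

Lemma is_pushforward_conjP (a b c d : C) (F G f g : C -> C) :
  (forall w, G w = (F w)^*) -> (forall z, g z = (f z)^*) ->
  is_pushforward a b c d F G f g <->
  (forall z, c * z + d != 0 ->
     F (mobius a b c d z) = mobius_deriv a b c d z * f z).
Proof.
move=> GE gE; split=> [pushed z /pushed[] // | pushed z nz].
by rewrite GE gE pushed // rmorphM.
Qed.

Lemma canonical_pushforwardP (a b c d m mu0 mu1 mu2 : C) : a * d - b * c = 1 ->
  is_pushforward a b c d (fun w => m + w ^+ 2) (fun w => m^* + (w^*) ^+ 2)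
    (gckv_z mu0 mu1 mu2) (gckv_zb mu0 mu1 mu2) <->
  [/\ push_mu0 a b c d mu0 mu1 mu2 = m, push_mu1 a b c d mu0 mu1 mu2 = 0
    & push_mu2 a b c d mu0 mu1 mu2 = 2].
Proof.
move=> det1; rewrite is_pushforward_conjP => [|w|z]; last 2 first.
- by rewrite rmorphD rmorphXn.
- exact: gckv_zbE.
have canonicalE w : m + w ^+ 2 = gckv_z m 0 2 w.
  by rewrite /gckv_z mul0r addr0 mulVf ?mul1r ?pnatr_eq0.
rewrite -gckv_z_pushforwardP //.
by split=> pushed z nz; [rewrite -canonicalE | rewrite canonicalE]; apply: pushed.
Qed.

Lemma canonical_push_paramsP (a b c d mu0 mu1 mu2 : C) : a * d - b * c = 1 ->
  push_mu1 a b c d mu0 mu1 mu2 = 0 /\ push_mu2 a b c d mu0 mu1 mu2 = 2 <->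
  a = 2^-1 * (d * mu2 - c * mu1) /\ b = 2^-1 * d * mu1 - c * mu0 /\
  2^-1 * d ^+ 2 * mu2 - c * d * mu1 + c ^+ 2 * mu0 = 1.
Proof.
move=> det1; set K := 2^-1 * d ^+ 2 * mu2 - c * d * mu1 + c ^+ 2 * mu0.
have two_neq0 : (2 : C) != 0 by rewrite pnatr_eq0.
have mu2E : push_mu2 a b c d mu0 mu1 mu2 = 2 * K by rewrite /push_mu2 /K; field.
rewrite mu2E; split=> [[mu1_0 mu2_2] | [aE [bE K1]]]; last first.
  by rewrite K1 mulr1 /push_mu1 aE bE; split=> //; field.
have K1 : K = 1 by apply: (mulfI two_neq0); rewrite mu2_2 mulr1.
split; last split=> //; apply/subr0_eq.
- transitivity (a * (1 - K) + 2^-1 * (c * mu1 - d * mu2) * (1 - (a * d - b * c))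
    - 2^-1 * c * push_mu1 a b c d mu0 mu1 mu2); first by rewrite /K /push_mu1; field.
  by rewrite K1 det1 mu1_0; ring.
- transitivity (b * (1 - K) - 2^-1 * (d * mu1 - 2 * c * mu0) * (1 - (a * d - b * c))
    - 2^-1 * d * push_mu1 a b c d mu0 mu1 mu2); first by rewrite /K /push_mu1; field.
  by rewrite K1 det1 mu1_0; ring.
Qed.

Lemma push_mu0_canonical (a b c d mu0 mu1 mu2 : C) : a * d - b * c = 1 ->
  push_mu1 a b c d mu0 mu1 mu2 = 0 -> push_mu2 a b c d mu0 mu1 mu2 = 2 ->
  push_mu0 a b c d mu0 mu1 mu2 = 4^-1 * gckv_invariant mu0 mu1 mu2.
Proof.
move=> det1 mu1_0 mu2_2.
by rewrite -(gckv_invariant_push _ _ _ det1) /gckv_invariant mu1_0 mu2_2; field.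
Qed.

End GCKVPushforward.

Theorem proposition7p2 (C : numClosedFieldType) (mu0 mu1 mu2 : C)
  (alpha beta gamma delta : C)
  (hnontriv : [|| mu0 != 0, mu1 != 0 | mu2 != 0])
  (hdet : alpha * delta - beta * gamma = 1) :
  ((exists mu0' : C,
      is_pushforward alpha beta gamma delta
        (fun w => mu0' + w ^+ 2) (fun w => mu0'^* + (w^*) ^+ 2)
        (gckv_z mu0 mu1 mu2) (gckv_zb mu0 mu1 mu2))
   <->
   (alpha = 2^-1 * (delta * mu2 - gamma * mu1) /\
    beta = 2^-1 * delta * mu1 - gamma * mu0 /\
    2^-1 * delta ^+ 2 * mu2 - gamma * delta * mu1 + gamma ^+ 2 * mu0 = 1))
  /\
  (alpha = 2^-1 * (delta * mu2 - gamma * mu1) ->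
   beta = 2^-1 * delta * mu1 - gamma * mu0 ->
   2^-1 * delta ^+ 2 * mu2 - gamma * delta * mu1 + gamma ^+ 2 * mu0 = 1 ->
   forall sigma tau : C, sigma \is Num.real -> tau \is Num.real ->
   sigma - 'i * tau = 2 * mu0 * mu2 - mu1 ^+ 2 ->
   is_pushforward alpha beta gamma delta
     (fun w => 4^-1 * (sigma - 'i * tau) + w ^+ 2)
     (fun w => 4^-1 * (sigma + 'i * tau) + (w^*) ^+ 2)
     (gckv_z mu0 mu1 mu2) (gckv_zb mu0 mu1 mu2)).
Proof.
have canonicalP m := canonical_pushforwardP m mu0 mu1 mu2 hdet.
have paramsP := canonical_push_paramsP mu0 mu1 mu2 hdet.
split.
  split=> [[m /canonicalP[_ mu1_0 mu2_2]] | /paramsP[mu1_0 mu2_2]].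
    exact/paramsP.
  by exists (push_mu0 alpha beta gamma delta mu0 mu1 mu2); apply/canonicalP.
move=> alphaE betaE K1 sigma tau sigma_real tau_real invariantE.
have [mu1_0 mu2_2] := paramsP.2 (conj alphaE (conj betaE K1)).
have conjE : 4^-1 * (sigma + 'i * tau) = (4^-1 * (sigma - 'i * tau))^*.
  rewrite !(rmorphM, rmorphB, fmorphV) /= conjCi (conj_Creal sigma_real).
  by rewrite (conj_Creal tau_real) (rmorph_nat _ 4) mulNr opprK.
rewrite conjE; apply/canonicalP; split=> //.
by rewrite invariantE (push_mu0_canonical hdet).
Qed.
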